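(* Let $G$ be a split VPT graph with split partition $(S,K)$ such that $|N(v)\cap S|\leq 2$ for every $v\in K$, and let $n\geq 4$. If the branch graph $B(G/K)$ contains an induced cycle $C_n$, then $G$ contains an induced $n$-sun $S_n$.
   Context: All graphs are finite, simple and connected. A graph is split if its vertex set partitions into a stable set $S$ and a clique (maximal complete set) $K$. VPT graphs are vertex-intersection graphs of paths in a tree. For $n\geq 4$, the $n$-sun $S_n$ is the split graph with stable set $\{s_1,\dots,s_n\}$, central clique $\{v_1,\dots,v_n\}$, $N(s_i)=\{v_i,v_{i+1}\}$ for $1\le i\le n-1$ and $N(s_n)=\{v_n,v_1\}$. For a clique $C$ of $G$, the branch graph $B(G/C)$ has vertex set the vertices of $V(G)\setminus C$ adjacent to some vertex of $C$, two such vertices $v,w$ being adjacent iff (1) $vw\notin E(G)$; (2) some vertex of $C$ is adjacent to both; (3) there exist $v',w'\in C$ with $v'$ adjacent to $v$ but not $w$, and $w'$ adjacent to $w$ but not $v$. *)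

From mathcomp Require Import all_boot.
Set Implicit Arguments. Unset Strict Implicit. Unset Printing Implicit Defensive.

Definition simple_graph (V : finType) (E : rel V) : Prop :=
  symmetric E /\ irreflexive E.

Definition connected_graph (V : finType) (E : rel V) : Prop :=
  forall x y : V, connect E x y.

Definition is_tree (T : finType) (e : rel T) : Prop :=
  [/\ simple_graph e, connected_graph e &
      forall s : seq T, 3 <= size s -> uniq s -> ~~ cycle e s].

Definition is_tree_path (T : finType) (e : rel T) (P : {set T}) : Prop :=
  exists (x : T) (p : seq T), [/\ uniq (x :: p), path e x p & P = [set:: x :: p]].

Definition VPT (V : finType) (E : rel V) : Prop :=
  exists (T : finType) (e : rel T) (P : V -> {set T}),
    [/\ is_tree e, forall v, is_tree_path e (P v) &
        forall u v : V, u != v -> (E u v <-> P u :&: P v != set0)].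

Definition complete_set (V : finType) (E : rel V) (A : {set V}) : Prop :=
  forall x y, x \in A -> y \in A -> x != y -> E x y.

Definition stable_set (V : finType) (E : rel V) (A : {set V}) : Prop :=
  forall x y, x \in A -> y \in A -> ~~ E x y.

Definition is_clique (V : finType) (E : rel V) (A : {set V}) : Prop :=
  complete_set E A /\
  (forall B : {set V}, A \subset B -> complete_set E B -> B = A).

Definition split_partition (V : finType) (E : rel V) (S K : {set V}) : Prop :=
  [/\ S :|: K = setT, [disjoint S & K], stable_set E S & is_clique E K].

Definition nbhd (V : finType) (E : rel V) (v : V) : {set V} := [set w | E v w].

Definition branch_vertex (V : finType) (E : rel V) (C : {set V}) (v : V) : bool :=
  (v \notin C) && [exists c in C, E v c].

Definition branch_adj (V : finType) (E : rel V) (C : {set V}) (v w : V) : bool :=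
  [&& branch_vertex E C v, branch_vertex E C w, ~~ E v w,
      [exists c in C, E c v && E c w],
      [exists v' in C, E v' v && ~~ E v' w] &
      [exists w' in C, E w' w && ~~ E w' v]].

Definition cyc_adj (n : nat) (i j : 'I_n) : bool :=
  (i.+1 %% n == j) || (j.+1 %% n == i).

Definition has_induced_cycle (V : finType) (A : pred V) (R : rel V) (n : nat) : Prop :=
  exists f : 'I_n -> V,
    [/\ injective f, forall i, A (f i) &
        forall i j, R (f i) (f j) = cyc_adj i j].

Definition has_induced_sun (V : finType) (E : rel V) (n : nat) : Prop :=
  exists (s v : 'I_n -> V),
    [/\ injective s, injective v, forall i j, s i != v j,
        (forall i j, ~~ E (s i) (s j)) /\ (forall i j, i != j -> E (v i) (v j)) &
        forall i j, E (s i) (v j) = ((val j == val i) || (val j == i.+1 %% n))].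

From mathcomp Require Import all_boot.
From mathcomp Require Import zify.

(* Let s_0, ..., s_(n-1) be an induced cycle of the branch graph
   B(G/K), s_(j-1) adjacent to s_j.  Branch vertices lie outside K, hence in the
   stable set S.  Condition (2) in the definition of branch adjacency provides,
   for each cycle edge s_(j-1) s_j, a clique vertex v_j adjacent to both ends.
   Because v_j has at most two neighbours in S, its neighbourhood in S is exactly
   {s_(j-1), s_j}.  Consequently s_i is adjacent to v_j iff j = i or j = i + 1
   (mod n), and two different indices j, k give different pairs of neighbours
   as soon as n >= 3, so the v_j are pairwise distinct.  Together with the
   stability of S and completeness of K this is an induced n-sun. *)

Lemma ordS_neq {n} (j : 'I_n) : 1 < n -> ordS j != j.
Proof.
move=> n_gt1; apply/negP=> /eqP/(congr1 val) /=.
have [jS_lt|jS_ge] := ltnP j.+1 n; first by rewrite (modn_small jS_lt); lia.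
have -> : j.+1 = n by have := ltn_ord j; lia.
by rewrite modnn; lia.
Qed.

Lemma ordSS_neq {n} (j : 'I_n) : 2 < n -> ordS (ordS j) != j.
Proof.
move=> n_gt2; apply/negP=> /eqP/(congr1 val) /=.
have j_lt := ltn_ord j.
have [jS_lt|jS_ge] := ltnP j.+1 n.
- rewrite (modn_small jS_lt).
  have [jSS_lt|jSS_ge] := ltnP j.+2 n; first by rewrite modn_small //; lia.
  have -> : j.+2 = n by lia.
  by rewrite modnn; lia.
- have -> : j.+1 = n by lia.
  by rewrite modnn modn_small; lia.
Qed.

Lemma ord_pred_eq {n} (i j : 'I_n) : (i == ord_pred j) = (ordS i == j).
Proof.
apply/eqP/eqP=> [->|<-]; [exact: ord_predK | exact: esym (ordSK i)].
Qed.

Lemma card_le2_members {T : finType} {A : {set T}} {x y : T} (z : T) :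
  #|A| <= 2 -> x \in A -> y \in A -> x != y -> (z \in A) = (z == x) || (z == y).
Proof.
move=> A_le2 xA yA xy; apply/idP/idP; last by case/orP=> /eqP->.
move=> zA; apply/negPn/negP; rewrite negb_or => /andP[zx zy].
have xyz_sub : [set z; x; y] \subset A.
  by apply/subsetP=> w; rewrite !inE => /orP[/orP[]|] /eqP->.
have := leq_trans (subset_leq_card xyz_sub) A_le2.
by rewrite -setUA cardsU1 cards2 xy !inE negb_or zx zy.
Qed.

Section SplitGraph.
Variables (V : finType) (E : rel V) (S K : {set V}).
Hypothesis E_sym : symmetric E.

Lemma branch_vertex_stable (x : V) :
  S :|: K = setT -> branch_vertex E K x -> x \in S.
Proof.
move=> SK /andP[xK _]; have : x \in S :|: K by rewrite SK inE.
by rewrite inE (negbTE xK) orbF.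
Qed.

Lemma private_neighbours (c x y z : V) :
  #|nbhd E c :&: S| <= 2 -> x \in S -> y \in S -> z \in S -> x != y ->
  E c x -> E c y -> E z c = (z == x) || (z == y).
Proof.
move=> c_le2 xS yS zS xy cx cy; rewrite E_sym.
have := card_le2_members z c_le2 _ _ xy.
by rewrite !inE cx cy xS yS zS /= andbT => ->.
Qed.

End SplitGraph.

Arguments branch_vertex_stable {V E S K x}.
Arguments private_neighbours {V E S} _ {c x y} z.

Section SunFromBranchCycle.
Variables (V : finType) (E : rel V) (S K : {set V}) (n : nat) (f : 'I_n -> V).
Hypotheses (E_sym : symmetric E) (SK : S :|: K = setT) (n_ge3 : 2 < n).
Hypothesis K_deg2 : forall c, c \in K -> #|nbhd E c :&: S| <= 2.
Hypothesis f_inj : injective f.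
Hypothesis f_branch : forall i, branch_vertex E K (f i).
Hypothesis f_cycle : forall i j, branch_adj E K (f i) (f j) = cyc_adj i j.

Let n_gt1 : 1 < n. Proof. exact: ltnW. Qed.

Let f_stable (i : 'I_n) : f i \in S.
Proof. exact: branch_vertex_stable SK (f_branch i). Qed.

Let ord_pred_neq (j : 'I_n) : ord_pred j != j.
Proof. by have := ordS_neq (ord_pred j) n_gt1; rewrite ord_predK eq_sym. Qed.

(* The clique vertex v_j of the sun: a common neighbour in K of the cycle
   vertices f (j - 1) and f j (the default value is never used). *)
Definition sun_clique (j : 'I_n) : V :=
  odflt (f j) [pick c in K | E c (f (ord_pred j)) && E c (f j)].

Lemma sun_clique_spec (j : 'I_n) :
  [/\ sun_clique j \in K, E (sun_clique j) (f (ord_pred j))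
                        & E (sun_clique j) (f j)].
Proof.
have : branch_adj E K (f (ord_pred j)) (f j).
  by rewrite f_cycle /cyc_adj -[_.+1 %% n]/(val (ordS _)) ord_predK eqxx.
case/and5P=> _ _ _ /existsP[c /andP[cK /andP[c_pj c_j]]] _.
rewrite /sun_clique; case: pickP => [d /and3P[] //|no_pick].
by have := no_pick c; rewrite cK c_pj c_j.
Qed.

Lemma sun_clique_adj (i j : 'I_n) :
  E (f i) (sun_clique j) = (i == ord_pred j) || (i == j).
Proof.
have [vK v_pj v_j] := sun_clique_spec j.
have f_pj_j : f (ord_pred j) != f j by rewrite (inj_eq f_inj) ord_pred_neq.
rewrite (private_neighbours E_sym (f i) (K_deg2 _ vK) _ _ _ f_pj_j) ?f_stable //.
by rewrite !(inj_eq f_inj).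
Qed.

Lemma sun_clique_inj : injective sun_clique.
Proof.
move=> j k v_jk.
have j_adj : (j == ord_pred k) || (j == k).
  by rewrite -sun_clique_adj -v_jk sun_clique_adj eqxx orbT.
have pj_adj : (ord_pred j == ord_pred k) || (ord_pred j == k).
  by rewrite -sun_clique_adj -v_jk sun_clique_adj eqxx.
case/orP: j_adj => [/eqP j_pk|/eqP //].
case/orP: pj_adj => [/eqP/ord_pred_inj //|/eqP pj_k].
have Sk_j : ordS k = j by rewrite -pj_k ord_predK.
have Sj_k : ordS j = k by rewrite j_pk ord_predK.
by have := ordSS_neq k n_ge3; rewrite Sk_j Sj_k eqxx.
Qed.

Lemma branch_cycle_sun :
  stable_set E S -> complete_set E K -> has_induced_sun E n.
Proof.
move=> S_stable K_complete.
exists f, sun_clique; split.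
- exact: f_inj.
- exact: sun_clique_inj.
- move=> i j; have [vK _ _] := sun_clique_spec j.
  by apply: contraNneq (proj1 (andP (f_branch i))) => ->.
- split=> [i j|i j ij]; first exact: S_stable.
  have [iK _ _] := sun_clique_spec i; have [jK _ _] := sun_clique_spec j.
  by apply: K_complete => //; rewrite (inj_eq sun_clique_inj).
- move=> i j; rewrite sun_clique_adj ord_pred_eq orbC.
  by rewrite [i == j]eq_sym [ordS i == j]eq_sym.
Qed.

End SunFromBranchCycle.

Arguments branch_cycle_sun {V E S K n f}.

Theorem mainTheorem12 (V : finType) (E : rel V) (S K : {set V}) (n : nat) :
  simple_graph E -> connected_graph E -> VPT E ->
  split_partition E S K ->
  (forall v, v \in K -> #|nbhd E v :&: S| <= 2) ->
  4 <= n ->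
  has_induced_cycle (branch_vertex E K) (branch_adj E K) n ->
  has_induced_sun E n.
Proof.
move=> [E_sym _] _ _ [SK _ S_stable [K_complete _]] K_deg2 n_ge4.
move=> [f [f_inj f_branch f_cycle]].
have n_ge3 : 2 < n by apply: ltnW.
exact: (branch_cycle_sun E_sym SK n_ge3 K_deg2 f_inj f_branch f_cycle
          S_stable K_complete).
Qed.
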